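(* For every $\mathrm{Sym}$-invariant lattice $L\subseteq\mathbb{Z}^{(\mathbb{N})}$, the monoid $M=L\cap\mathbb{Z}_{\ge0}^{(\mathbb{N})}$ has a finite equivariant Hilbert basis.
   Context: $\mathbb{N}=\{1,2,\dots\}$. $\mathbb{Z}^{(\mathbb{N})}$ is the group of finitely supported integer sequences (standard basis $\mathbf{e}_i$), $\mathbb{Z}_{\ge0}^{(\mathbb{N})}$ its nonnegative elements; a lattice is a subgroup. $\mathrm{Sym}$ is the group of permutations of $\mathbb{N}$ fixing all but finitely many points, acting by $\sigma(\mathbf{e}_i)=\mathbf{e}_{\sigma(i)}$. A Hilbert basis of a monoid is a minimal generating set w.r.t. $\mathbb{Z}_{\ge0}$-linear combinations; $\mathcal{H}\subseteq M$ is an equivariant Hilbert basis if $\mathrm{Sym}(\mathcal{H})=\{\sigma(\mathbf{h})\}$ is a Hilbert basis of $M$. *)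

From Stdlib Require Import ZArith List.
Import ListNotations.
Open Scope Z_scope.

(* Integer sequences indexed by nat (index i stands for i+1 in the paper). *)
Definition vec := nat -> Z.

Definition finsupp (v : vec) : Prop :=
  exists n : nat, forall i : nat, (n <= i)%nat -> v i = 0.

Definition vzero : vec := fun _ => 0.
Definition vadd (u v : vec) : vec := fun i => u i + v i.
Definition vopp (v : vec) : vec := fun i => - v i.

Definition is_lattice (L : vec -> Prop) : Prop :=
  (forall v, L v -> finsupp v) /\ L vzero /\
  (forall u v, L u -> L v -> L (vadd u v)) /\
  (forall v, L v -> L (vopp v)).

Record finperm := FinPerm {
  pf : nat -> nat;
  pf_inv : nat -> nat;
  pf_invK : forall i, pf_inv (pf i) = i;
  pf_K : forall i, pf (pf_inv i) = i;
  pf_fin : exists n : nat, forall i : nat, (n <= i)%nat -> pf i = i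
}.

(* Action sigma(e_i) = e_{sigma i}, i.e. (sigma v)_i = v_{sigma^{-1} i}. *)
Definition act (s : finperm) (v : vec) : vec := fun i => v (pf_inv s i).

Definition sym_invariant (L : vec -> Prop) : Prop :=
  forall (s : finperm) (v : vec), L v -> L (act s v).

Definition nonneg (v : vec) : Prop := forall i, 0 <= v i.

Definition nonneg_part (L : vec -> Prop) : vec -> Prop :=
  fun v => L v /\ nonneg v.

Definition nncomb (B : vec -> Prop) (v : vec) : Prop :=
  exists cs : list (nat * vec),
    Forall (fun p => B (snd p)) cs /\
    forall i, v i = fold_right (fun p acc => Z.of_nat (fst p) * snd p i + acc) 0 cs.

Definition generates (B M : vec -> Prop) : Prop :=
  (forall v, B v -> M v) /\ (forall v, M v -> nncomb B v).

Definition hilbert_basis (B M : vec -> Prop) : Prop :=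
  generates B M /\
  forall B' : vec -> Prop,
    (forall v, B' v -> B v) -> generates B' M -> forall v, B v -> B' v.

Definition orbit (H : list vec) : vec -> Prop :=
  fun v => exists (s : finperm) (h : vec), In h H /\ v = act s h.

Definition equivariant_hilbert_basis (H : list vec) (M : vec -> Prop) : Prop :=
  (forall h, In h H -> M h) /\ hilbert_basis (orbit H) M.

(* Let I be the group of integers c with c (e_i - e_j) in L for all i <> j.  Swapping
   an index of v in L with one outside its support shows that every coordinate of v
   lies in I; conversely, a finitely supported vector with coordinates in I and
   coordinate sum 0 lies in L.  If M has no element of positive coordinate sum, M = 0.
   Otherwise let b be the least such sum.  Every v in M of sum at least b dominates a
   vector w with coordinates in I and sum b, chosen greedily, and w - u is in L for
   any u in M of sum b, so w is in M; hence the elements of M of sum b generate M.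
   They are irredundant, since an element of sum b dominates each summand with
   positive coefficient in a nonnegative combination representing it, and a dominated
   summand of the same sum is equal to it.  This level set is Sym-invariant, and a
   permutation moves each of its elements onto the first b coordinates, with entries
   at most b: finitely many orbits. *)

From Stdlib Require Import ZArith List Lia Wf_nat Permutation FinFun.
From Stdlib Require Import Classical FunctionalExtensionality.
Import ListNotations.
Open Scope Z_scope.

Ltac no_eqb t := match t with context [Nat.eqb _ _] => fail 1 | _ => idtac end.

Ltac eqb_cases :=
  repeat (match goal with
          | |- context [Nat.eqb ?x ?y] => no_eqb x; no_eqb y; destruct (Nat.eqb_spec x y)
          end; cbn beta iota);
  try lia.

Definition vanishes_from (v : vec) (n : nat) : Prop := forall i, (n <= i)%nat -> v i = 0.

Fixpoint sum_to (n : nat) (f : nat -> Z) : Z :=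
  match n with O => 0 | S m => sum_to m f + f m end.

Definition has_sum (v : vec) (s : Z) : Prop := exists n, vanishes_from v n /\ sum_to n v = s.

Definition vsub (u v : vec) : vec := vadd u (vopp v).
Definition vle (u v : vec) : Prop := forall i, u i <= v i.

Definition ind (i : nat) (c : Z) : vec := fun m => if Nat.eqb m i then c else 0.
Definition ediff (c : Z) (i j : nat) : vec := fun m => ind i c m - ind j c m.

Lemma sum_to_ext n f g : (forall m, (m < n)%nat -> f m = g m) -> sum_to n f = sum_to n g.
Proof.
  induction n as [|n IH]; intros Hfg; simpl; auto.
  rewrite IH by (intros; apply Hfg; lia). rewrite Hfg by lia. reflexivity.
Qed.

Lemma sum_to_vsub n u v : sum_to n (vsub u v) = sum_to n u - sum_to n v.
Proof. induction n; simpl; unfold vsub, vadd, vopp in *; lia. Qed.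

Lemma sum_to_vanishes_from f n n' : vanishes_from f n -> (n <= n')%nat -> sum_to n' f = sum_to n f.
Proof. intros Hf Hle; induction Hle; simpl; auto. rewrite IHHle, Hf by lia; lia. Qed.

Lemma sum_to_nonneg n f : (forall m, 0 <= f m) -> 0 <= sum_to n f.
Proof. intros Hf; induction n; simpl; auto; try lia. specialize (Hf n); lia. Qed.

Lemma sum_to_mono f n n' : (forall m, 0 <= f m) -> (n <= n')%nat -> sum_to n f <= sum_to n' f.
Proof. intros Hf Hle; induction Hle; simpl; try lia. specialize (Hf m); lia. Qed.

Lemma sum_to_ge_entry f n m : (forall m, 0 <= f m) -> (m < n)%nat -> f m <= sum_to n f.
Proof.
  intros Hf Hm. pose proof (sum_to_mono f (S m) n Hf Hm). simpl in *.
  pose proof (sum_to_nonneg m f Hf). lia.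
Qed.

Lemma sum_to_ge_count K f : (forall j, (j < K)%nat -> 1 <= f j) -> Z.of_nat K <= sum_to K f.
Proof.
  induction K as [|K IH]; intros Hf; simpl; try lia.
  specialize (IH (fun j Hj => Hf j ltac:(lia))). specialize (Hf K ltac:(lia)). lia.
Qed.

Lemma sum_to_ind n i c : (i < n)%nat -> sum_to n (ind i c) = c.
Proof.
  induction n as [|n IH]; intros Hi; [lia|]. simpl. unfold ind at 2.
  destruct (Nat.eqb_spec n i) as [->|].
  - rewrite (sum_to_ext _ _ (fun _ => 0)); [|intros m Hm; unfold ind; eqb_cases].
    clear; induction i; simpl; lia.
  - rewrite IH by lia; lia.
Qed.

Lemma sum_to_ediff n c i j : (i < n)%nat -> (j < n)%nat -> sum_to n (ediff c i j) = 0.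
Proof.
  intros Hi Hj. rewrite (sum_to_ext _ _ (vsub (ind i c) (ind j c))) by reflexivity.
  rewrite sum_to_vsub, !sum_to_ind; lia.
Qed.

Lemma fold_right_Zadd_acc l a : fold_right Z.add a l = fold_right Z.add 0 l + a.
Proof. induction l; simpl; lia. Qed.

Lemma fold_right_Zadd_perm l l' : Permutation l l' -> fold_right Z.add 0 l = fold_right Z.add 0 l'.
Proof. induction 1; simpl; lia. Qed.

Lemma sum_to_as_list n f : sum_to n f = fold_right Z.add 0 (map f (seq 0 n)).
Proof.
  induction n as [|n IH]; auto.
  rewrite seq_S, map_app, fold_right_app, fold_right_Zadd_acc. simpl. rewrite IH. lia.
Qed.

Lemma pf_inv_fix (s : finperm) N :
  (forall i, (N <= i)%nat -> pf s i = i) -> forall i, (N <= i)%nat -> pf_inv s i = i.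
Proof. intros HN i Hi. rewrite <- (HN i Hi) at 1. apply pf_invK. Qed.

Lemma sum_to_act (s : finperm) N v :
  (forall i, (N <= i)%nat -> pf s i = i) -> sum_to N (act s v) = sum_to N v.
Proof.
  intros HN. rewrite !sum_to_as_list. unfold act. rewrite <- (map_map (pf_inv s) v).
  apply fold_right_Zadd_perm, Permutation_map, Permutation_map_same_l.
  - apply Injective_map_NoDup; [|apply seq_NoDup].
    intros x y Hxy. rewrite <- (pf_K s x), <- (pf_K s y), Hxy. reflexivity.
  - intros x Hx. apply in_map_iff in Hx as [i [<- Hi]]. apply in_seq in Hi. apply in_seq.
    split; [lia|]. destruct (Nat.lt_ge_cases (pf_inv s i) N) as [|Hge]; auto.
    apply HN in Hge. rewrite pf_K in Hge. lia.
Qed.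

Lemma has_sum_sum_to v n s : vanishes_from v n -> has_sum v s -> sum_to n v = s.
Proof.
  intros Hn [n' [Hn' <-]].
  rewrite <- (sum_to_vanishes_from v n (n + n')), <- (sum_to_vanishes_from v n' (n + n'));
    auto; lia.
Qed.

Lemma has_sum_unique v s t : has_sum v s -> has_sum v t -> s = t.
Proof. intros [n [Hn <-]] Ht. apply has_sum_sum_to; auto. Qed.

Lemma has_sum_of_finsupp v : finsupp v -> exists s, has_sum v s.
Proof. intros [n Hn]. exists (sum_to n v), n. split; auto. Qed.

Lemma has_sum_vsub u v s t : has_sum u s -> has_sum v t -> has_sum (vsub u v) (s - t).
Proof.
  intros [n [Hn Hs]] [n' [Hn' Ht]]. exists (n + n')%nat. split.
  - intros i Hi. unfold vsub, vadd, vopp. rewrite Hn, Hn' by lia. lia.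
  - rewrite sum_to_vsub, (sum_to_vanishes_from u n), (sum_to_vanishes_from v n'); auto; lia.
Qed.

Lemma has_sum_nonneg v s : nonneg v -> has_sum v s -> 0 <= s.
Proof. intros Hv [n [_ <-]]. apply sum_to_nonneg, Hv. Qed.

Lemma has_sum_entry v s i : nonneg v -> has_sum v s -> v i <= s.
Proof.
  intros Hv [n [Hn <-]]. destruct (Nat.lt_ge_cases i n).
  - apply sum_to_ge_entry; auto.
  - rewrite Hn by lia. apply sum_to_nonneg, Hv.
Qed.

Lemma has_sum_0_nonneg v : nonneg v -> has_sum v 0 -> forall i, v i = 0.
Proof. intros Hv Hs i. pose proof (has_sum_entry v 0 i Hv Hs). specialize (Hv i). lia. Qed.

Lemma vle_has_sum_eq u v s : vle u v -> has_sum u s -> has_sum v s -> u = v.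
Proof.
  intros Huv Hu Hv. apply functional_extensionality. intros i.
  assert (Hdiff : nonneg (vsub v u)) by (intros j; unfold vsub, vadd, vopp; specialize (Huv j); lia).
  pose proof (has_sum_0_nonneg _ Hdiff ltac:(replace 0 with (s - s) by lia; now apply has_sum_vsub) i).
  unfold vsub, vadd, vopp in *. lia.
Qed.

Lemma has_sum_act s v c : has_sum v c -> has_sum (act s v) c.
Proof.
  intros [n [Hn <-]]. destruct (pf_fin s) as [N HN]. exists (n + N)%nat. split.
  - intros i Hi. unfold act. rewrite (pf_inv_fix s N HN i) by lia. apply Hn; lia.
  - rewrite sum_to_act by (intros; apply HN; lia). apply sum_to_vanishes_from; auto; lia.
Qed.

Definition perm_id : finperm :=
  FinPerm (fun i => i) (fun i => i) (fun _ => eq_refl) (fun _ => eq_refl)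
    (ex_intro _ 0%nat (fun _ _ => eq_refl)).

Definition swap_fun (a b m : nat) : nat := if Nat.eqb m a then b else if Nat.eqb m b then a else m.

Lemma swap_funK a b m : swap_fun a b (swap_fun a b m) = m.
Proof. unfold swap_fun. eqb_cases. Qed.

Lemma swap_fun_fin a b : exists n, forall i, (n <= i)%nat -> swap_fun a b i = i.
Proof. exists (S (a + b)). intros i Hi. unfold swap_fun. eqb_cases. Qed.

Definition swap (a b : nat) : finperm :=
  FinPerm (swap_fun a b) (swap_fun a b) (swap_funK a b) (swap_funK a b) (swap_fun_fin a b).

Lemma pf_inv_fin (s : finperm) : exists n, forall i, (n <= i)%nat -> pf_inv s i = i.
Proof. destruct (pf_fin s) as [n Hn]. exists n. apply pf_inv_fix, Hn. Qed.

Definition perm_inv (s : finperm) : finperm :=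
  FinPerm (pf_inv s) (pf s) (pf_K s) (pf_invK s) (pf_inv_fin s).

Lemma perm_comp_invK (t s : finperm) i : pf_inv s (pf_inv t (pf t (pf s i))) = i.
Proof. now rewrite !pf_invK. Qed.

Lemma perm_comp_K (t s : finperm) i : pf t (pf s (pf_inv s (pf_inv t i))) = i.
Proof. now rewrite !pf_K. Qed.

Lemma perm_comp_fin (t s : finperm) : exists n, forall i, (n <= i)%nat -> pf t (pf s i) = i.
Proof.
  destruct (pf_fin s) as [n Hn], (pf_fin t) as [k Hk]. exists (n + k)%nat. intros i Hi.
  rewrite Hn, Hk by lia. reflexivity.
Qed.

Definition perm_comp (t s : finperm) : finperm :=
  FinPerm (fun i => pf t (pf s i)) (fun i => pf_inv s (pf_inv t i))
    (perm_comp_invK t s) (perm_comp_K t s) (perm_comp_fin t s).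

Lemma act_comp t s v : act (perm_comp t s) v = act t (act s v).
Proof. reflexivity. Qed.

Lemma act_invK s v : act (perm_inv s) (act s v) = v.
Proof. apply functional_extensionality. intros i. unfold act. simpl. now rewrite pf_invK. Qed.

Lemma act_swap_ediff a b k c : k <> a -> k <> b -> act (swap a b) (ediff c a k) = ediff c b k.
Proof.
  intros. apply functional_extensionality. intros m.
  unfold act, ediff, ind. cbn. unfold swap_fun. eqb_cases.
Qed.

Definition comb (cs : list (nat * vec)) : vec :=
  fun i => fold_right (fun p acc => Z.of_nat (fst p) * snd p i + acc) 0 cs.

Lemma nncomb_mono (B B' : vec -> Prop) v : (forall x, B x -> B' x) -> nncomb B v -> nncomb B' v.
Proof. intros HB [cs [Hcs Hv]]. exists cs. split; auto. eapply Forall_impl; [|exact Hcs]; auto. Qed.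

Lemma nncomb_zero (B : vec -> Prop) v : (forall i, v i = 0) -> nncomb B v.
Proof. intros Hv. exists []. split; auto. Qed.

Lemma nncomb_add (B : vec -> Prop) w u v :
  B w -> nncomb B u -> (forall i, v i = w i + u i) -> nncomb B v.
Proof.
  intros Hw [cs [Hcs Hu]] Hv. exists ((1%nat, w) :: cs). split; [constructor; auto|].
  intros i. cbn [fold_right fst snd]. rewrite Hv, Hu. lia.
Qed.

Lemma comb_nonneg cs : Forall (fun p => nonneg (snd p)) cs -> nonneg (comb cs).
Proof.
  unfold comb. induction 1 as [|[c h] cs Hh Hcs IH]; intros i; simpl; try lia.
  specialize (IH i). specialize (Hh i). simpl in Hh. nia.
Qed.

Lemma comb_summand_le cs : Forall (fun p => nonneg (snd p)) cs -> (exists i, comb cs i <> 0) ->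
  exists p, In p cs /\ vle (snd p) (comb cs).
Proof.
  induction 1 as [|[c h] cs Hh Hcs IH]; intros [i0 Hi0]; [now contradict Hi0|].
  destruct c as [|c].
  - destruct IH as [p [Hp Hle]]; [exists i0; unfold comb in *; simpl in Hi0; lia|].
    exists p. split; [now right|]. intros i. specialize (Hle i). unfold comb in *. simpl. lia.
  - exists (S c, h). split; [now left|]. intros i. unfold comb. cbn [fold_right fst snd].
    pose proof (comb_nonneg cs Hcs i). specialize (Hh i). simpl in Hh. unfold comb in *. nia.
Qed.

Section SubgroupOfZ.

Variable I : Z -> Prop.
Hypothesis I_0 : I 0.
Hypothesis I_sub : forall x y, I x -> I y -> I (x - y).

Lemma subgroup_add x y : I x -> I y -> I (x + y).
Proof.
  intros Hx Hy. replace (x + y) with (x - (0 - y)) by lia. auto.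
Qed.

Lemma subgroup_sum_to n f : (forall m, I (f m)) -> I (sum_to n f).
Proof. intros Hf. induction n; simpl; auto using subgroup_add. Qed.

Lemma exists_le_with_sum v : nonneg v -> (forall m, I (v m)) ->
  forall n t, I t -> 0 <= t <= sum_to n v ->
  exists w, vanishes_from w n /\ (forall m, 0 <= w m <= v m) /\ (forall m, I (w m)) /\
            sum_to n w = t.
Proof.
  intros Hv HI n. induction n as [|n IH]; intros t It Ht; simpl in Ht.
  - exists vzero. unfold vzero. split; [|split; [|split]].
    + intros i _. reflexivity.
    + intros m. split; [lia|apply Hv].
    + auto.
    + simpl. lia.
  - destruct (Z_le_gt_dec t (sum_to n v)).
    + destruct (IH t It ltac:(lia)) as (w & Hw0 & Hwv & HwI & Hws).
      exists w. split; [intros i Hi; apply Hw0; lia|]. split; [|split]; auto.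
      simpl. rewrite Hws, Hw0; lia.
    + exists (fun m => if (m <? n)%nat then v m else if (m =? n)%nat then t - sum_to n v else 0).
      split; [|split; [|split]].
      * intros i Hi. destruct (Nat.ltb_spec i n); [lia|]. eqb_cases.
      * intros m. destruct (Nat.ltb_spec m n); [split; [apply Hv|lia]|].
        destruct (Nat.eqb_spec m n) as [->|]; [lia|split; [lia|apply Hv]].
      * intros m. destruct (Nat.ltb_spec m n), (Nat.eqb_spec m n); auto using subgroup_sum_to.
      * simpl. rewrite Nat.ltb_irrefl, Nat.eqb_refl.
        rewrite (sum_to_ext n _ v); [lia|]. intros m Hm. destruct (Nat.ltb_spec m n); lia.
Qed.

End SubgroupOfZ.

Section SymInvariantLattice.

Variable L : vec -> Prop.
Hypothesis L_lattice : is_lattice L.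

Lemma lattice_ext u v : L u -> (forall i, u i = v i) -> L v.
Proof. intros Hu Huv. replace v with u; auto. apply functional_extensionality; auto. Qed.

Lemma lattice_finsupp v : L v -> finsupp v.
Proof. apply L_lattice. Qed.

Lemma lattice_vzero : L vzero.
Proof. apply L_lattice. Qed.

Lemma lattice_vadd u v : L u -> L v -> L (vadd u v).
Proof. apply L_lattice. Qed.

Lemma lattice_vopp v : L v -> L (vopp v).
Proof. apply L_lattice. Qed.

Lemma lattice_vsub u v : L u -> L v -> L (vsub u v).
Proof. intros. apply lattice_vadd, lattice_vopp; auto. Qed.

Definition diff_coeff (c : Z) : Prop := forall i j, i <> j -> L (ediff c i j).

Lemma diff_coeff_0 : diff_coeff 0.
Proof.
  intros i j _. apply (lattice_ext _ _ lattice_vzero). intros m. unfold vzero, ediff, ind. eqb_cases.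
Qed.

Lemma diff_coeff_sub c d : diff_coeff c -> diff_coeff d -> diff_coeff (c - d).
Proof.
  intros Hc Hd i j Hij. apply (lattice_ext _ _ (lattice_vsub _ _ (Hc i j Hij) (Hd i j Hij))).
  intros m. unfold vsub, vadd, vopp, ediff, ind. eqb_cases.
Qed.

Lemma diff_coeff_ediff c i j m : diff_coeff c -> diff_coeff (ediff c i j m).
Proof.
  intros Hc. pose proof diff_coeff_0. pose proof (diff_coeff_sub _ _ diff_coeff_0 Hc).
  unfold ediff, ind. destruct (Nat.eqb m i), (Nat.eqb m j).
  - replace (c - c) with 0 by lia. auto.
  - replace (c - 0) with c by lia. auto.
  - auto.
  - replace (0 - 0) with 0 by lia. auto.
Qed.

Lemma lattice_of_zero_sum n u : vanishes_from u n -> (forall m, diff_coeff (u m)) ->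
  sum_to n u = 0 -> L u.
Proof.
  revert u. induction n as [|m IH]; intros u Hu HI Hs.
  - apply (lattice_ext _ _ lattice_vzero). intros i. rewrite Hu; auto; lia.
  - destruct (Nat.eq_dec m 0) as [->|Hm].
    + apply (lattice_ext _ _ lattice_vzero). intros [|i]; unfold vzero; simpl in Hs; [lia|]. rewrite Hu; auto; lia.
    + set (u' := vadd u (ediff (u m) 0 m)).
      assert (Hu'm : u' m = 0) by (unfold u', vadd, ediff, ind; eqb_cases).
      assert (Lu' : L u').
      { apply IH.
        - intros i Hi. destruct (Nat.eq_dec i m) as [->|]; auto.
          unfold u', vadd, ediff, ind. rewrite Hu by lia. eqb_cases.
        - intros i. unfold u', vadd.
          replace (u i + ediff (u m) 0 m i) with (u i - (0 - ediff (u m) 0 m i)) by lia.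
          apply diff_coeff_sub, diff_coeff_sub, diff_coeff_ediff; auto using diff_coeff_0.
        - assert (Hs' : sum_to (S m) u' = 0).
          { rewrite (sum_to_ext _ _ (vsub u (ediff (u m) m 0))).
            - rewrite sum_to_vsub, Hs, sum_to_ediff; lia.
            - intros i _. unfold u', vsub, vadd, vopp, ediff, ind. lia. }
          simpl in Hs'. lia. }
      apply (lattice_ext _ _ (lattice_vsub _ _ Lu' (HI m 0%nat m (not_eq_sym Hm)))).
      intros i. unfold u', vsub, vadd, vopp, ediff, ind. eqb_cases.
Qed.

Hypothesis L_sym : sym_invariant L.

Lemma diff_coeff_entry v i : L v -> diff_coeff (v i).
Proof.
  intros Lv p q Hpq. destruct (lattice_finsupp v Lv) as [n Hn].
  set (k := (n + i + p + q + 1)%nat).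
  assert (Hvk : v k = 0) by (apply Hn; unfold k; lia).
  assert (Hk : k <> i /\ k <> p /\ k <> q) by (unfold k; lia).
  clearbody k.
  (* [v] vanishes at [k], so swapping [i] and [k] changes [v] by [v i] times [e_i - e_k]. *)
  assert (Lik : L (ediff (v i) i k)).
  { apply (lattice_ext _ _ (lattice_vsub _ _ Lv (L_sym (swap i k) v Lv))).
    intros m. unfold vsub, vadd, vopp, act, ediff, ind. cbn. unfold swap_fun. eqb_cases.
    - subst. rewrite Hvk. lia.
    - subst. rewrite Hvk. lia. }
  pose proof (L_sym (swap i p) _ Lik) as Lpk. rewrite act_swap_ediff in Lpk by lia.
  pose proof (L_sym (swap i q) _ Lik) as Lqk. rewrite act_swap_ediff in Lqk by lia.
  apply (lattice_ext _ _ (lattice_vsub _ _ Lpk Lqk)).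
  intros m. unfold vsub, vadd, vopp, ediff, ind. eqb_cases.
Qed.

Definition level_set (b : Z) : vec -> Prop := fun v => nonneg_part L v /\ has_sum v b.

Lemma level_set_sym_invariant b : sym_invariant (level_set b).
Proof.
  intros s v [[Lv Hv] Hs]. split; [split|]; auto using has_sum_act.
  intros i. apply Hv.
Qed.

Lemma level_set_le b s u0 v : level_set b u0 -> nonneg_part L v -> has_sum v s -> 0 <= b <= s ->
  exists w, level_set b w /\ vle w v.
Proof.
  intros [[Lu0 _] [n0 [Hn0 Hu0]]] [Lv Hv] Hs Hbs.
  destruct (lattice_finsupp v Lv) as [n Hn].
  set (N := (n + n0)%nat).
  assert (HvN : sum_to N v = s).
  { apply has_sum_sum_to; auto. intros i Hi. apply Hn. unfold N in Hi. lia. }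
  assert (Hu0N : sum_to N u0 = b).
  { rewrite <- Hu0. apply sum_to_vanishes_from; auto. unfold N. lia. }
  assert (Ib : diff_coeff b).
  { rewrite <- Hu0. apply subgroup_sum_to; auto using diff_coeff_0, diff_coeff_sub, diff_coeff_entry. }
  destruct (exists_le_with_sum diff_coeff diff_coeff_0 diff_coeff_sub v Hv
              (fun m => diff_coeff_entry v m Lv) N b Ib ltac:(lia)) as (w & Hw0 & Hwv & HwI & Hws).
  assert (Lw : L w).
  { assert (Lwu : L (vsub w u0)).
    { apply (lattice_of_zero_sum N).
      - intros i Hi. unfold vsub, vadd, vopp. rewrite Hw0, Hn0 by (unfold N in Hi; lia). lia.
      - intros m. apply diff_coeff_sub; auto using diff_coeff_entry.
      - rewrite sum_to_vsub. lia. }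
    apply (lattice_ext _ _ (lattice_vadd _ _ Lwu Lu0)).
    intros i. unfold vsub, vadd, vopp. lia. }
  exists w. split; [split; [split|exists N; auto]|]; auto.
  - intros i. apply Hwv.
  - intros i. apply Hwv.
Qed.

Lemma nonneg_part_generated_by_level_set b : 0 < b -> (exists u0, level_set b u0) ->
  (forall v s, nonneg_part L v -> has_sum v s -> 0 < s -> b <= s) ->
  forall v, nonneg_part L v -> nncomb (level_set b) v.
Proof.
  intros Hb [u0 Hu0] Hmin.
  enough (Hgen : forall S v, nonneg_part L v -> has_sum v (Z.of_nat S) -> nncomb (level_set b) v).
  { intros v [Lv Hv]. destruct (has_sum_of_finsupp v (lattice_finsupp v Lv)) as [s Hs].
    apply (Hgen (Z.to_nat s)); [split; auto|].
    rewrite Z2Nat.id; auto. eapply has_sum_nonneg; eauto. }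
  intros S. induction S as [S IH] using (well_founded_induction lt_wf). intros v Mv Hs.
  destruct (Nat.eq_dec S 0) as [->|HS].
  - apply nncomb_zero, has_sum_0_nonneg; [apply Mv|exact Hs].
  - assert (Hbs : b <= Z.of_nat S) by (apply (Hmin v); auto; lia).
    destruct (level_set_le b _ u0 v Hu0 Mv Hs ltac:(lia)) as [w [Hw Hwv]].
    apply (nncomb_add _ w (vsub v w)); auto.
    + apply (IH (S - Z.to_nat b)%nat ltac:(lia)).
      * split; [apply lattice_vsub; [apply Mv|apply Hw]|].
        intros i. unfold vsub, vadd, vopp. specialize (Hwv i). lia.
      * replace (Z.of_nat (S - Z.to_nat b)) with (Z.of_nat S - b) by lia.
        apply has_sum_vsub; auto. apply Hw.
    + intros i. unfold vsub, vadd, vopp. lia.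
Qed.

End SymInvariantLattice.

Lemma act_vanishes_from_sum v (K : nat) : nonneg v -> has_sum v (Z.of_nat K) ->
  exists s, vanishes_from (act s v) K.
Proof.
  intros Hv [n [Hn Hs]]. revert v Hv Hn Hs. induction n as [|m IH]; intros v Hv Hn Hs.
  { exists perm_id. intros i _. apply Hn. lia. }
  destruct (le_lt_dec (S m) K).
  { exists perm_id. intros i Hi. apply Hn. lia. }
  destruct (Z.eq_dec (v m) 0) as [Hvm|Hvm].
  { apply IH; auto.
    - intros i Hi. destruct (Nat.eq_dec i m) as [->|]; auto. apply Hn. lia.
    - simpl in Hs. lia. }
  (* Some index below [K] is free: otherwise the first [K] entries and [v m] already sum to more than [K]. *)
  destruct (classic (exists j, (j < K)%nat /\ v j = 0)) as [[j [Hj Hvj]]|Hfull].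
  - set (w := act (swap j m) v).
    assert (Hw : vanishes_from w m).
    { intros i Hi. unfold w, act. cbn. unfold swap_fun. eqb_cases. apply Hn. lia. }
    destruct (IH w) as [s Hsw]; auto.
    + intros i. apply Hv.
    + assert (Hsum : sum_to (S m) w = Z.of_nat K).
      { unfold w. rewrite sum_to_act; auto. intros i Hi. cbn. unfold swap_fun. eqb_cases. }
      simpl in Hsum. rewrite (Hw m) in Hsum by lia. lia.
    + exists (perm_comp s (swap j m)). rewrite act_comp. exact Hsw.
  - exfalso.
    assert (HK : Z.of_nat K <= sum_to K v).
    { apply sum_to_ge_count. intros j Hj. specialize (Hv j).
      destruct (Z.eq_dec (v j) 0); [|lia]. exfalso. eauto. }
    pose proof (sum_to_mono v K m Hv ltac:(lia)). simpl in Hs. specialize (Hv m). lia.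
Qed.

Fixpoint box_list (b : Z) (n : nat) : list vec :=
  match n with
  | O => [vzero]
  | S m =>
      flat_map (fun v => map (fun c x => if Nat.eqb x m then c else v x)
                             (map Z.of_nat (seq 0 (S (Z.to_nat b)))))
               (box_list b m)
  end.

Lemma in_box_list b n v : vanishes_from v n -> (forall m, 0 <= v m <= b) -> In v (box_list b n).
Proof.
  revert v. induction n as [|m IH]; intros v Hn Hb; cbn [box_list].
  - left. apply functional_extensionality. intros x. unfold vzero. rewrite Hn; auto; lia.
  - apply in_flat_map. exists (fun x => if Nat.eqb x m then 0 else v x). split.
    + apply IH.
      * intros x Hx. destruct (Nat.eqb_spec x m); auto. apply Hn; lia.
      * intros x. destruct (Nat.eqb x m); auto. specialize (Hb m). lia.
    + apply in_map_iff. exists (v m). split.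
      * apply functional_extensionality. intros x. destruct (Nat.eqb_spec x m); subst; auto.
      * apply in_map_iff. exists (Z.to_nat (v m)). specialize (Hb m).
        split; [lia|]. apply in_seq. lia.
Qed.

Lemma exists_filter_list (F : list vec) (P : vec -> Prop) :
  exists H, forall h, In h H <-> In h F /\ P h.
Proof.
  induction F as [|a F [H IH]]; [exists []; simpl; tauto|].
  destruct (classic (P a)); [exists (a :: H)|exists H]; intros h; simpl; rewrite IH;
    intuition congruence.
Qed.

Lemma sym_invariant_level_orbit (P : vec -> Prop) b : 0 <= b -> sym_invariant P ->
  (forall v, P v -> nonneg v /\ has_sum v b) ->
  exists H, (forall h, In h H -> P h) /\ (forall v, P v <-> orbit H v).
Proof.
  intros Hb HP Hlev.
  destruct (exists_filter_list (box_list b (Z.to_nat b)) P) as [H HH].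
  exists H. split; [intros h Hh; apply HH, Hh|]. intros v. split.
  - intros Pv. destruct (Hlev v Pv) as [Hv Hs].
    destruct (act_vanishes_from_sum v (Z.to_nat b) Hv ltac:(rewrite Z2Nat.id; auto)) as [s Hsv].
    exists (perm_inv s), (act s v). split; [|symmetry; apply act_invK].
    apply HH. split; [|auto].
    destruct (Hlev _ (HP s v Pv)) as [Hsv' Hss].
    apply in_box_list; auto. intros m. split; [apply Hsv'|]. apply (has_sum_entry _ _ _ Hsv' Hss).
  - intros [s [h [Hh ->]]]. apply HP, HH, Hh.
Qed.

Lemma hilbert_basis_of_level (B M : vec -> Prop) b : 0 < b ->
  (forall v, B v -> nonneg v /\ has_sum v b) -> generates B M -> hilbert_basis B M.
Proof.
  intros Hb Hlev HBM. split; auto.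
  intros B' HB' [_ HM] v Bv. destruct (Hlev v Bv) as [Hv Hs].
  destruct (HM v (proj1 HBM v Bv)) as [cs [Hcs Hcomb]].
  assert (Hcs_nonneg : Forall (fun p => nonneg (snd p)) cs).
  { eapply Forall_impl; [|exact Hcs]. intros p Hp. apply Hlev, HB', Hp. }
  destruct (comb_summand_le cs Hcs_nonneg) as [[c h] [Hp Hhv]].
  { apply NNPP. intros Hzero.
    assert (Hs0 : has_sum v 0).
    { exists 0%nat. split; auto. intros i _. rewrite Hcomb. apply NNPP. eauto. }
    pose proof (has_sum_unique _ _ _ Hs Hs0). lia. }
  rewrite Forall_forall in Hcs. specialize (Hcs _ Hp). simpl in Hhv, Hcs.
  replace v with h; auto.
  apply (vle_has_sum_eq _ _ b); auto; [|apply Hlev, HB', Hcs].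
  intros i. rewrite Hcomb. apply Hhv.
Qed.

Lemma equivariant_hilbert_basis_nil (M : vec -> Prop) :
  (forall v, M v -> forall i, v i = 0) -> equivariant_hilbert_basis [] M.
Proof.
  intros HM. split; [intros h []|]. split; [split|].
  - intros v (s & h & [] & _).
  - intros v Mv. apply nncomb_zero, HM, Mv.
  - intros B' _ _ v (s & h & [] & _).
Qed.

Lemma exists_least_positive_sum (M : vec -> Prop) :
  (exists v s, M v /\ has_sum v s /\ 0 < s) ->
  exists b, 0 < b /\ (exists u, M u /\ has_sum u b) /\
            forall v s, M v -> has_sum v s -> 0 < s -> b <= s.
Proof.
  intros (v & s & Mv & Hs & Hpos).
  set (P := fun k => (0 < k)%nat /\ exists u, M u /\ has_sum u (Z.of_nat k)).
  destruct (dec_inh_nat_subset_has_unique_least_element P (fun k => classic (P k)))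
    as (K & ((HK & u & Mu & Hu) & Hleast) & _).
  { exists (Z.to_nat s). split; [lia|]. exists v. rewrite Z2Nat.id by lia. auto. }
  exists (Z.of_nat K). repeat split; [lia|eauto|].
  intros w t Mw Ht Htpos. enough (K <= Z.to_nat t)%nat by lia.
  apply Hleast. split; [lia|]. exists w. rewrite Z2Nat.id by lia. auto.
Qed.

Theorem lemma4p8 :
  forall L : vec -> Prop,
    is_lattice L -> sym_invariant L ->
    exists H : list vec, equivariant_hilbert_basis H (nonneg_part L).
Proof.
  intros L HL HS.
  destruct (classic (exists v s, nonneg_part L v /\ has_sum v s /\ 0 < s)) as [Hpos|Hnone].
  - destruct (exists_least_positive_sum _ Hpos) as (b & Hb & Hu0 & Hmin).
    assert (Hlev : forall v, level_set L b v -> nonneg v /\ has_sum v b)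
      by (intros v [[_ Hv] Hs]; auto).
    destruct (sym_invariant_level_orbit (level_set L b) b) as (H & HH & Horbit);
      auto using level_set_sym_invariant; try lia.
    exists H. split; [intros h Hh; apply HH, Hh|].
    apply (hilbert_basis_of_level _ _ b Hb); [intros v Hv; apply Hlev, Horbit, Hv|split].
    + intros v Hv. apply Horbit, Hv.
    + intros v Mv. apply (nncomb_mono (level_set L b)); [intros; apply Horbit; auto|].
      apply nonneg_part_generated_by_level_set; auto.
  - exists []. apply equivariant_hilbert_basis_nil. intros v [Lv Hv].
    destruct (has_sum_of_finsupp v (proj1 HL v Lv)) as [s Hs].
    apply has_sum_0_nonneg; auto. replace 0 with s; auto.
    pose proof (has_sum_nonneg v s Hv Hs). destruct (Z.eq_dec s 0); auto.
    exfalso. apply Hnone. exists v, s. repeat split; auto. lia.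
Qed.
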